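(* Assume the no-anticipation, common-support and transition-independence conditions stated in the context. Then for every $t\ge T_0+1$, \[ \boldsymbol\mu^{\mathrm{ATT}}_t=\sum_{\mathbf x_1^{T_0}\in\mathcal X^{T_0}}\Big\{\mathbb{E}\big[\mathbf X_t\mid \mathbf X_1^{T_0}=\mathbf x_1^{T_0},D=1\big]-\mathbb{E}\big[\mathbf X_t\mid \mathbf X_1^{T_0}=\mathbf x_1^{T_0},D=0\big]\Big\}\Pr(\mathbf X_1^{T_0}=\mathbf x_1^{T_0}\mid D=1), \] where terms with $\Pr(\mathbf X_1^{T_0}=\mathbf x_1^{T_0}\mid D=1)=0$ are omitted.
   Context: Fix integers $T_0\ge1$, $T_1\ge1$, $T=T_0+T_1$, $K\ge2$, and a set of $K$ outcome categories $\mathcal Y=\{\bar y^{(1)},\dots,\bar y^{(K)}\}$. On a probability space, a unit has a binary treatment indicator $D\in\{0,1\}$ (treated units are untreated in periods $1,\dots,T_0$ and treated in periods $T_0+1,\dots,T$; control units are never treated) and potential outcomes $Y_t(0),Y_t(1)\in\mathcal Y$, $t=1,\dots,T$. For $d\in\{0,1\}$ let $\mathbf X_t(d)=(\mathbf 1(Y_t(d)=\bar y^{(1)}),\dots,\mathbf 1(Y_t(d)=\bar y^{(K)}))^\top\in\mathcal X:=\{x\in\{0,1\}^K:\sum_k x^{(k)}=1\}$. Observed outcomes: $\mathbf X_t=\mathbf X_t(0)$ for $t\le T_0$ and $\mathbf X_t=D\mathbf X_t(1)+(1-D)\mathbf X_t(0)$ for $t\ge T_0+1$. Write $\mathbf X_1^{T_0}=(\mathbf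 X_1,\dots,\mathbf X_{T_0})$, $\mathbf X_1^{T_0}(0)=(\mathbf X_1(0),\dots,\mathbf X_{T_0}(0))$, and $\boldsymbol\mu^{\mathrm{ATT}}_t=\mathbb{E}[\mathbf X_t(1)-\mathbf X_t(0)\mid D=1]$ for $t\ge T_0+1$. Conditional quantities are taken only given events of positive probability. No anticipation: $\mathbf X_t(1)=\mathbf X_t(0)$ for $t\le T_0$. Common support: there is $\epsilon>0$ with $\epsilon\le\Pr(D=1\mid\mathbf X_1^{T_0}=\mathbf x_1^{T_0})<1-\epsilon$ for every $\mathbf x_1^{T_0}$ with $\Pr(\mathbf X_1^{T_0}=\mathbf x_1^{T_0})>0$. Transition independence: for every $t\ge T_0+1$, $\mathbf x_t\in\mathcal X$, $\mathbf x_1^{T_0}\in\mathcal X^{T_0}$: $\Pr(\mathbf X_t(0)=\mathbf x_t\mid \mathbf X_1^{T_0}(0)=\mathbf x_1^{T_0},D=1)=\Pr(\mathbf X_t(0)=\mathbf x_t\mid \mathbf X_1^{T_0}(0)=\mathbf x_1^{T_0},D=0)$. *)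

From mathcomp Require Import all_boot all_order all_algebra.
From mathcomp Require Import all_classical all_reals all_analysis.
Set Implicit Arguments. Unset Strict Implicit. Unset Printing Implicit Defensive.
Import Order.TTheory GRing.Theory Num.Theory.
Local Open Scope classical_set_scope.
Local Open Scope ring_scope.

Section Defs.
Context (d : measure_display) (T : measurableType d) (R : realType)
        (P : probability T R).

Definition Pr (A : set T) : R := fine (P A).

(* conditional probability Pr(A | B) (only used for Pr B > 0) *)
Definition cPr (A B : set T) : R := Pr (A `&` B) / Pr B.

(* E[ X | B ] for the one-hot vector X = (1(Y = k))_k of a categorical
   variable Y with categories 'I_K; component k is Pr(Y = k | B). *)
Definition condE (K : nat) (Y : T -> 'I_K) (B : set T) : 'cV[R]_K :=
  \col_(k < K) cPr [set w | Y w = k] B.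

End Defs.

Definition Dev (T : Type) (D : T -> bool) (b : bool) : set T :=
  [set w | D w = b].

Definition Yobs (T : Type) (K T0 : nat) (D : T -> bool)
  (Y0 Y1 : nat -> T -> 'I_K) (t : nat) (w : T) : 'I_K :=
  if (t <= T0)%N then Y0 t w else if D w then Y1 t w else Y0 t w.

(* the event {(Y_1, ..., Y_T0) = (x_1, ..., x_T0)}; x i is the value in period i+1 *)
Definition hist (T : Type) (K T0 : nat) (Y : nat -> T -> 'I_K)
  (x : {ffun 'I_T0 -> 'I_K}) : set T :=
  [set w | forall i : 'I_T0, Y i.+1 w = x i].

Definition muATT d (T : measurableType d) (R : realType) (P : probability T R)
  (K : nat) (D : T -> bool) (Y0 Y1 : nat -> T -> 'I_K) (t : nat) : 'cV[R]_K :=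
  condE P (Y1 t) (Dev D true) - condE P (Y0 t) (Dev D true).

From mathcomp Require Import all_boot all_order all_algebra.
From mathcomp Require Import all_classical all_reals all_analysis.
Import Order.TTheory GRing.Theory Num.Theory.
Local Open Scope classical_set_scope.
Local Open Scope ring_scope.

(* Before treatment the observed outcomes are the untreated ones, so the observed
   histories partition the sample space exactly as the [Y0]-histories do.  By the
   law of total probability over these histories, each component of the ATT is
   a p_x-weighted sum of Pr(Y_t(1) = k | x, D = 1) - Pr(Y_t(0) = k | x, D = 1).
   Transition independence replaces the counterfactual Pr(Y_t(0) = k | x, D = 1)
   by the observed Pr(Y_t = k | x, D = 0); common support makes the conditioning
   event {x, D = 0} non-null whenever p_x > 0. *)

Section conditional_probability.
Context {d} {T : measurableType d} {R : realType} (P : probability T R).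
Implicit Types A B C : set T.

Lemma Pr_ge0 A : 0 <= Pr P A.
Proof. exact/fine_ge0/measure_ge0. Qed.

Lemma le_Pr A B : measurable A -> measurable B -> A `<=` B -> Pr P A <= Pr P B.
Proof.
move=> mA mB AB; apply: fine_le; rewrite ?fin_num_measure //.
by rewrite le_measure ?inE.
Qed.

Lemma Pr_setI_setC A B : measurable A -> measurable B ->
  Pr P A = Pr P (A `&` B) + Pr P (A `&` ~` B).
Proof.
move=> mA mB; rewrite /Pr (measureDI P mA mB) addrC fineD ?fin_num_measure //.
- exact: measurableI.
- exact: measurableD.
Qed.

Lemma Pr_partition {I : finType} (f : T -> I) {A} :
  (forall i, measurable (f @^-1` [set i])) -> measurable A ->
  Pr P A = \sum_i Pr P (A `&` f @^-1` [set i]).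
Proof.
move=> mf mA.
have cover : A = \bigcup_(i in [set: I]) (A `&` f @^-1` [set i]).
  by apply/seteqP; split=> [w Aw|w [i _ []//]]; exists (f w).
rewrite {1}cover /Pr measure_fin_bigcup //; first last.
- by move=> i _; apply: measurableI.
- apply/trivIsetP => i j _ _ ij; apply/seteqP; split => w // [[_ fi] [_ fj]].
  by move: ij; rewrite -fi -fj eqxx.
- exact: finite_finset.
rewrite (fsbigE (enum I)) ?enum_uniq //; last by move=> i _; rewrite mem_enum.
rewrite -sum_fine; last by move=> i _; apply: fin_num_measure; apply: measurableI.
by under eq_bigl do rewrite in_setT; rewrite big_enum.
Qed.

Lemma cPr_gt0 A B : (0 < cPr P A B) = (Pr P (A `&` B) != 0) && (Pr P B != 0).
Proof.
by rewrite lt_def divr_ge0 ?Pr_ge0 // andbT mulf_eq0 invr_eq0 negb_or.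
Qed.

Lemma eq_cPr {A A' B} : A `&` B = A' `&` B -> cPr P A B = cPr P A' B.
Proof. by rewrite /cPr => ->. Qed.

Lemma cPr_chain A B C : Pr P (B `&` C) != 0 ->
  cPr P B C * cPr P A (B `&` C) = Pr P (A `&` (B `&` C)) / Pr P C.
Proof. by move=> BC0; rewrite /cPr mulrC mulrA divfK. Qed.

Lemma cPr_lt1_setC A B : measurable A -> measurable B ->
  0 < Pr P B -> cPr P A B < 1 -> 0 < Pr P (B `&` ~` A).
Proof.
move=> mA mB B_gt0; rewrite /cPr ltr_pdivrMr // mul1r setIC (Pr_setI_setC B A mB mA).
by rewrite -subr_gt0 addrAC subrr add0r.
Qed.

Lemma cPr_total {I : finType} (f : T -> I) {A C} :
  (forall i, measurable (f @^-1` [set i])) -> measurable A -> measurable C ->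
  cPr P A C = \sum_(i | 0 < cPr P (f @^-1` [set i]) C)
                 cPr P (f @^-1` [set i]) C * cPr P A (f @^-1` [set i] `&` C).
Proof.
move=> mf mA mC; have mFC i : measurable (f @^-1` [set i] `&` C).
  exact: measurableI.
rewrite {1}/cPr (Pr_partition f) ?mulr_suml //; last exact: measurableI.
under eq_bigr do rewrite setIAC -setIA.
rewrite [LHS](bigID (fun i => 0 < cPr P (f @^-1` [set i]) C)) /=.
rewrite [X in _ + X]big1 ?addr0 => [|i]; last first.
  rewrite cPr_gt0 negb_and !negbK => /orP[/eqP FC0|/eqP C0]; last first.
    by rewrite C0 invr0 mulr0.
  have : Pr P (A `&` (f @^-1` [set i] `&` C)) <= 0.
    by rewrite -FC0 le_Pr //; apply: measurableI.
  by rewrite le_eqVlt ltNge Pr_ge0 orbF => /eqP ->; rewrite mul0r.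
apply: eq_bigr => i; rewrite cPr_gt0 => /andP[FC0 _].
by rewrite -cPr_chain.
Qed.
End conditional_probability.

Section histories.
Context {T : Type} {K : nat} (T0 : nat).

Definition history (Y : nat -> T -> 'I_K) (w : T) : {ffun 'I_T0 -> 'I_K} :=
  [ffun i : 'I_T0 => Y i.+1 w].

Lemma hist_preimage (Y : nat -> T -> 'I_K) :
  @hist T K T0 Y = fun x => history Y @^-1` [set x].
Proof.
apply: funext => x; apply/seteqP; split => w /=.
  by move=> Yx; apply/ffunP => i; rewrite ffunE Yx.
by move=> <- i; rewrite ffunE.
Qed.

Lemma hist_Yobs (D : T -> bool) (Y0 Y1 : nat -> T -> 'I_K) :
  @hist T K T0 (Yobs T0 D Y0 Y1) = hist Y0.
Proof.
by apply: funext => x; apply/seteqP; split => w /= Yx i; move: (Yx i);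
  rewrite /Yobs ltn_ord.
Qed.

Lemma Yobs_after_T0 {D : T -> bool} {Y0 Y1 : nat -> T -> 'I_K} {t k b} {S : set T} :
  (T0 < t)%N ->
  [set w | Yobs T0 D Y0 Y1 t w = k] `&` (S `&` Dev D b) =
  [set w | (if b then Y1 else Y0) t w = k] `&` (S `&` Dev D b).
Proof.
move=> T0_lt_t; apply/seteqP; split => w [+ [Sw /= Dw]];
  by rewrite /Yobs leqNgt T0_lt_t /= Dw; case: b Dw.
Qed.

Lemma Dev_false (D : T -> bool) : Dev D false = ~` Dev D true.
Proof. by apply/seteqP; split => w; rewrite /Dev /=; case: (D w). Qed.

End histories.

Lemma measurable_hist d (T : measurableType d) (K T0 : nat)
    (Y : nat -> T -> 'I_K) (x : {ffun 'I_T0 -> 'I_K}) :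
  (forall t k, measurable [set w | Y t w = k]) -> measurable (hist Y x).
Proof.
move=> mY; have -> : hist Y x = \bigcap_(i in [set: 'I_T0]) [set w | Y i.+1 w = x i].
  by apply/seteqP; split => w Yx i; [move=> _; exact: Yx | exact: Yx].
by apply: fin_bigcap_measurable => //; exact: finite_finset.
Qed.

Theorem corollary1 (d : measure_display) (T : measurableType d) (R : realType)
  (P : probability T R) (T0 T1 K : nat) (D : T -> bool) (Y0 Y1 : nat -> T -> 'I_K) :
  (1 <= T0)%N -> (1 <= T1)%N -> (2 <= K)%N ->
  (* measurability of the random variables *)
  measurable (Dev D true) ->
  (forall (t : nat) (k : 'I_K), measurable [set w | Y0 t w = k]) ->
  (forall (t : nat) (k : 'I_K), measurable [set w | Y1 t w = k]) ->
  (* no anticipation *)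
  (forall t w, (1 <= t <= T0)%N -> Y1 t w = Y0 t w) ->
  (* common support *)
  (exists eps : R, 0 < eps /\
     forall x : {ffun 'I_T0 -> 'I_K},
       0 < Pr P (hist (Yobs T0 D Y0 Y1) x) ->
       eps <= cPr P (Dev D true) (hist (Yobs T0 D Y0 Y1) x) < 1 - eps) ->
  (* transition independence *)
  (forall (t : nat) (k : 'I_K) (x : {ffun 'I_T0 -> 'I_K}),
     (T0 + 1 <= t <= T0 + T1)%N ->
     0 < Pr P (hist Y0 x `&` Dev D true) ->
     0 < Pr P (hist Y0 x `&` Dev D false) ->
     cPr P [set w | Y0 t w = k] (hist Y0 x `&` Dev D true)
     = cPr P [set w | Y0 t w = k] (hist Y0 x `&` Dev D false)) ->
  forall t : nat, (T0 + 1 <= t <= T0 + T1)%N ->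
    muATT P D Y0 Y1 t =
    \sum_(x : {ffun 'I_T0 -> 'I_K} |
            0 < cPr P (hist (Yobs T0 D Y0 Y1) x) (Dev D true))
      cPr P (hist (Yobs T0 D Y0 Y1) x) (Dev D true) *:
      (condE P (Yobs T0 D Y0 Y1 t) (hist (Yobs T0 D Y0 Y1) x `&` Dev D true)
       - condE P (Yobs T0 D Y0 Y1 t) (hist (Yobs T0 D Y0 Y1) x `&` Dev D false)).
Proof.
move=> _ _ _ mD1 mY0 mY1 _ [eps [eps_gt0 support]] trans_indep t t_range.
have T0_lt_t : (T0 < t)%N by case/andP: t_range; rewrite addn1.
have mH (x : {ffun 'I_T0 -> 'I_K}) : measurable (hist Y0 x) by exact: measurable_hist.
have mD0 : measurable (Dev D false) by rewrite Dev_false; exact: measurableC.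
rewrite hist_Yobs hist_preimage /= in support mH trans_indep *.
apply/matrixP => k j; rewrite /muATT /condE summxE !mxE.
under eq_bigr do rewrite !mxE.
rewrite !(cPr_total P (history T0 Y0) mH) // -sumrB.
apply: eq_bigr => x; rewrite cPr_gt0 => /andP[HD1_neq0 _].
rewrite -mulrBr !(eq_cPr P (Yobs_after_T0 _ T0_lt_t)) /=.
have HD1_gt0 : 0 < Pr P (history T0 Y0 @^-1` [set x] `&` Dev D true).
  by rewrite lt_def HD1_neq0 Pr_ge0.
have HD0_gt0 : 0 < Pr P (history T0 Y0 @^-1` [set x] `&` Dev D false).
  have H_gt0 : 0 < Pr P (history T0 Y0 @^-1` [set x]).
    by apply: lt_le_trans HD1_gt0 _; apply: le_Pr => //; exact: measurableI.
  rewrite Dev_false; apply: cPr_lt1_setC => //.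
  have /andP[_ D1_lt] := support x H_gt0.
  by apply: lt_le_trans D1_lt _; rewrite lerBlDr lerDl ltW.
by rewrite trans_indep.
Qed.
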